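(* Let $p(z)=z^{d_1}+\sum_{j<d_1}a_jz^j$ and $q(z)=z^{d_2}+\sum_{j<d_2}b_jz^j$ in $\mathbb{C}[z]$ with $d_1,d_2\ge1$. Then there exist polynomials $r\in\mathbb{C}[z]$ and $R_1,R_2\in\mathbb{C}[x,y]$ such that $r(x-y)=R_1(x,y)p(x)+R_2(x,y)q(y)$; $\deg r=d_1d_2$ and the leading coefficient of $r$ is $1$; $\deg R_1<d_1d_2$ and $\deg R_2<d_1d_2$; the coefficients of $r$ lie in $\mathcal{T}(d_1+d_2,2^{d_1+d_2}(d_1d_2)!)$; and the coefficients of $R_1,R_2$ lie in $\mathcal{T}(\tilde d,4^{\tilde d}\tilde d!)$, where $\tilde d:=(d_1+1)(d_2+1)$.
   Context: Let $K:=\{\pm a_j:0\le j<d_1\}\cup\{\pm b_j:0\le j<d_2\}$. For $k,l\in\mathbb{N}_0$, $\mathcal{T}(k,l):=\{f\in\mathbb{C}: f=\sum_{j=1}^{l'}\prod_{i=1}^kx_{i,j}\text{ for some }x_{i,j}\in\{0,\pm1\}\cup K\text{ and }0\le l'\le l\}$, with empty sums equal to $0$ and empty products equal to $1$. *)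

(* complex numbers are R[i] (mathcomp-real-closed) over a
   realType R (any complete archimedean ordered field, i.e. the reals);
   bivariate polynomials are {mpoly C[2]} (multinomials), x = 'X_0, y = 'X_1. *)
From HB Require Import structures.
From mathcomp Require Import all_boot all_order all_algebra.
From mathcomp Require Import reals complex mpoly.
Set Implicit Arguments. Unset Strict Implicit. Unset Printing Implicit Defensive.
Import GRing.Theory Num.Theory.
Local Open Scope ring_scope.

Section Defs.
Variables (R : realType) (d1 d2 : nat) (a : 'I_d1 -> R[i]) (b : 'I_d2 -> R[i]).

Definition inK (x : R[i]) : Prop :=
  (exists j : 'I_d1, x = a j \/ x = - a j) \/
  (exists j : 'I_d2, x = b j \/ x = - b j).

Definition allowed (x : R[i]) : Prop :=
  x = 0 \/ x = 1 \/ x = -1 \/ inK x.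

Definition inT (k l : nat) (f : R[i]) : Prop :=
  exists l' : nat, (l' <= l)%N /\
    exists X : 'I_l' -> 'I_k -> R[i],
      (forall j i, allowed (X j i)) /\ f = \sum_(j < l') \prod_(i < k) X j i.

Definition pp : {poly R[i]} := 'X^d1 + \sum_(j < d1) a j *: 'X^j.
Definition qq : {poly R[i]} := 'X^d2 + \sum_(j < d2) b j *: 'X^j.

End Defs.

Definition peval2 (R : realType) (p : {poly R[i]}) (t : {mpoly R[i][2]})
  : {mpoly R[i][2]} := (map_poly (@mpolyC 2 _) p).[t].

(* Multiplication by x - y on C[x,y]/(p(x), q(y)) has, in the monomial basis
   x^i y^j (i < d1, j < d2), a matrix N whose entries are sums of products of
   elements of {0, +-1} and K (a Kronecker sum of the companion matrices of p
   and q); take r := char_poly N.  Evaluating X - N at x - y gives a matrix P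
   with P v = p(x) U - q(y) W, where v is the column of monomials and the
   entries of U, W are 0 or monomials.  As v has the entry 1 at x^0 y^0,
   Cramer's rule gives r(x - y) = det P = p(x) det P_U - q(y) det P_W, where
   P_U, P_W are P with that column replaced by U and W.  The coefficient bounds
   come from the Leibniz expansion of the three determinants: in row x^i y^j
   each term has at most w := [i = d1 - 1] + [j = d2 - 1] factors from K and
   there are at most 2^w terms (2^(w+1) once x - y is substituted), while the
   w add up to d1 + d2 over all rows. *)

From HB Require Import structures.
From mathcomp Require Import all_boot all_order all_algebra.
From mathcomp Require Import reals complex mpoly.
From mathcomp Require Import fingroup perm zify ring.
Import Order.TTheory GRing.Theory Num.Theory.
Local Open Scope ring_scope.

Section Allowed.
Context {R : realType} {d1 d2 : nat} {a : 'I_d1 -> R[i]} {b : 'I_d2 -> R[i]}.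
Local Notation allowed := (allowed a b).

Lemma allowed0 : allowed 0. Proof. by left. Qed.
Lemma allowed1 : allowed 1. Proof. by right; left. Qed.
Lemma allowed_a j : allowed (a j). Proof. by do 3!right; left; exists j; left. Qed.
Lemma allowed_b j : allowed (b j). Proof. by do 4!right; exists j; left. Qed.

Lemma allowedN x : allowed x -> allowed (- x).
Proof.
case=> [->|[->|[->|[[j [->|->]]|[j [->|->]]]]]]; rewrite ?oppr0 ?opprK.
- exact: allowed0.
- by do 2!right; left.
- exact: allowed1.
- by do 3!right; left; exists j; right.
- exact: allowed_a.
- by do 4!right; exists j; right.
- exact: allowed_b.
Qed.

Lemma allowed_signed (s t : bool) x : allowed x -> allowed ((-1) ^+ s * t%:R * x).
Proof.
case: t => [|_]; last by rewrite mulr0 mul0r; apply: allowed0.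
by case: s; rewrite ?expr1 ?expr0 mulr1 ?mulN1r ?mul1r //; apply: allowedN.
Qed.

Definition pad {k} k' (X : 'I_k -> R[i]) (i : 'I_k') : R[i] :=
  oapp X 1 (insub (val i)).

Lemma pad_allowed {k k'} (X : 'I_k -> R[i]) (i : 'I_k') :
  (forall i, allowed (X i)) -> allowed (pad k' X i).
Proof. by move=> hX; rewrite /pad; case: insub => [j|] /=; [apply: hX|apply: allowed1]. Qed.

Lemma prod_pad {k k'} (X : 'I_k -> R[i]) : (k <= k')%N ->
  \prod_(i < k') pad k' X i = \prod_(i < k) X i.
Proof.
move=> le_kk'; pose F (m : nat) := oapp X 1 (insub m).
rewrite [RHS](eq_bigr (F \o val)) => [|i _]; last by rewrite /F /= valK.
rewrite (big_ord_widen _ F le_kk') [RHS]big_mkcond; apply: eq_bigr => i _.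
by rewrite /pad /F; case: ltnP => // le_ki; rewrite insubN // -leqNgt.
Qed.

End Allowed.

Section TExpansion.
Context {R : realType} {d1 d2 : nat} {a : 'I_d1 -> R[i]} {b : 'I_d2 -> R[i]}.
Context {S : comNzRingType} {phi : {rmorphism R[i] -> S}} {mono : int -> S -> Prop}.
Hypotheses (mono1 : forall D : int, 0 <= D -> mono D 1)
  (monoM : forall D D' m m', mono D m -> mono D' m' -> mono (D + D') (m * m'))
  (mono_le : forall (D D' : int) m, D <= D' -> mono D m -> mono D' m).
Local Notation allowed := (allowed a b).

(* T(k, l) lifted to S, each term carrying a monomial of degree at most D.  The
   sign is kept apart from the factors because k may be 0. *)
Definition Tpoly (k l : nat) (D : int) (f : S) : Prop :=
  exists J : finType, (#|J| <= l)%N /\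
  exists (s : J -> bool) (X : J -> 'I_k -> R[i]) (m : J -> S),
    [/\ forall j i, allowed (X j i), forall j, mono D (m j)
      & f = \sum_j phi ((-1) ^+ s j * \prod_i X j i) * m j].

Lemma Tpoly0 {k l D} : Tpoly k l D 0.
Proof.
exists void; rewrite card_void; split=> //.
by exists (fun=> false), (fun _ _ => 1), (fun=> 1); split=> [[]|[]|]; rewrite big1 // => -[].
Qed.

Lemma Tpoly_widen {k l D k' l' D' f} : (k <= k')%N -> (l <= l')%N -> D <= D' ->
  Tpoly k l D f -> Tpoly k' l' D' f.
Proof.
move=> le_k le_l le_D [J [hJ [s [X [m [hX hm ->]]]]]].
exists J; split; first exact: leq_trans le_l.
exists s, (fun j => pad k' (X j)), m; split=> [j i|j|].
- exact: pad_allowed.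
- exact: mono_le (hm j).
by apply: eq_bigr => j _; rewrite prod_pad.
Qed.

Lemma TpolyD {k l1 l2 D f g} :
  Tpoly k l1 D f -> Tpoly k l2 D g -> Tpoly k (l1 + l2) D (f + g).
Proof.
move=> [J1 [h1 [s1 [X1 [m1 [hX1 hm1 ->]]]]]] [J2 [h2 [s2 [X2 [m2 [hX2 hm2 ->]]]]]].
exists (J1 + J2)%type; split; first by rewrite card_sum leq_add.
exists (fun j => match j with inl j => s1 j | inr j => s2 j end),
  (fun j => match j with inl j => X1 j | inr j => X2 j end),
  (fun j => match j with inl j => m1 j | inr j => m2 j end).
by split=> [[j|j]|[j|j]|]; [apply: hX1|apply: hX2|apply: hm1|apply: hm2|rewrite big_sumType].
Qed.

Lemma Tpoly_sign {k l D f} (s : bool) : Tpoly k l D f -> Tpoly k l D ((-1) ^+ s * f).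
Proof.
move=> [J [hJ [s' [X [m [hX hm ->]]]]]].
exists J; split=> //; exists (fun j => s (+) s' j), X, m; split=> //.
rewrite mulr_sumr; apply: eq_bigr => j _.
by rewrite signr_addb !rmorphM !rmorph_sign; ring.
Qed.

Lemma TpolyN {k l D f} : Tpoly k l D f -> Tpoly k l D (- f).
Proof. by rewrite -mulN1r; apply: (Tpoly_sign true). Qed.

Lemma Tpoly_cond {k l D f} (c : bool) :
  (c -> Tpoly k l D f) -> Tpoly k (c * l) D (c%:R * f).
Proof. by case: c => [/(_ isT)|_]; rewrite ?mul1n ?mul1r ?mul0r //; apply: Tpoly0. Qed.

Lemma Tpoly_mono {k D m} : mono D m -> Tpoly k 1 D m.
Proof.
move=> hm; apply: (@Tpoly_widen 0 1 D) => //.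
exists 'I_1; rewrite card_ord; split=> //.
exists (fun=> false), (fun _ _ => 1), (fun=> m); split=> // [_ []//|].
by rewrite big_ord1 big_ord0 mulr1 rmorph1 mul1r.
Qed.

Lemma Tpoly1 {k D} : 0 <= D -> Tpoly k 1 D 1.
Proof. by move=> /mono1 /Tpoly_mono. Qed.

Lemma TpolyC {k D c} : (0 < k)%N -> 0 <= D -> allowed c -> Tpoly k 1 D (phi c).
Proof.
move=> k_gt0 /mono1 m1 hc; apply: (@Tpoly_widen 1 1 D) => //.
exists 'I_1; rewrite card_ord; split=> //.
exists (fun=> false), (fun _ _ => c), (fun=> 1); split=> //.
by rewrite !big_ord1 mulr1 mul1r.
Qed.

Lemma TpolyM {k1 l1 D1 k2 l2 D2 f g} : Tpoly k1 l1 D1 f -> Tpoly k2 l2 D2 g ->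
  Tpoly (k1 + k2) (l1 * l2) (D1 + D2) (f * g).
Proof.
move=> [J1 [h1 [s1 [X1 [m1 [hX1 hm1 ->]]]]]] [J2 [h2 [s2 [X2 [m2 [hX2 hm2 ->]]]]]].
exists (J1 * J2)%type; split; first by rewrite card_prod leq_mul.
pose X j i := match split i with inl i => X1 j.1 i | inr i => X2 j.2 i end.
exists (fun j => s1 j.1 (+) s2 j.2), X, (fun j => m1 j.1 * m2 j.2).
split=> [j i|j|]; first by rewrite /X; case: split.
  exact: monoM.
rewrite big_distrlr pair_big /=; apply: eq_bigr => -[j1 j2] _ /=.
rewrite big_split_ord.
have -> : \prod_(i < k1) X (j1, j2) (lshift k2 i) = \prod_i X1 j1 i.
  by apply: eq_bigr => i _; rewrite /X (unsplitK (inl _ i)).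
have -> : \prod_(i < k2) X (j1, j2) (rshift k1 i) = \prod_i X2 j2 i.
  by apply: eq_bigr => i _; rewrite /X (unsplitK (inr _ i)).
rewrite signr_addb !rmorphM /=; ring.
Qed.

Lemma Tpoly_sum {I : finType} {k l D} {F : I -> S} :
  (forall i, Tpoly k l D (F i)) -> Tpoly k (#|I| * l) D (\sum_i F i).
Proof.
move=> hF; rewrite cardT enumT [index_enum I]unlock.
elim: (Finite.enum I) => [|i r IH]; first by rewrite big_nil; apply: Tpoly0.
by rewrite big_cons mulSn; apply: TpolyD.
Qed.

Lemma Tpoly_prod {I : finType} {k l : I -> nat} {D : I -> int} {F : I -> S} :
  (forall i, Tpoly (k i) (l i) (D i) (F i)) ->
  Tpoly (\sum_i k i) (\prod_i l i) (\sum_i D i) (\prod_i F i).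
Proof.
move=> hF; elim: (index_enum I) => [|i r IH]; first by rewrite !big_nil; apply: Tpoly1.
by rewrite !big_cons; apply: TpolyM.
Qed.

Lemma Tpoly_det {n} {M : 'M[S]_n} {k l : 'I_n -> nat} {D : 'I_n -> 'I_n -> int}
    {Dt} :
  (forall r c, Tpoly (k r) (l r) (D r c) (M r c)) ->
  (forall s : 'S_n, \sum_r D r (s r) <= Dt) ->
  Tpoly (\sum_r k r) (n`! * \prod_r l r) Dt (\det M).
Proof.
move=> hM hD; rewrite -card_Sn; apply: Tpoly_sum => s.
exact: Tpoly_widen (leqnn _) (leqnn _) (hD s)
  (Tpoly_sign _ (Tpoly_prod (fun r => hM r (s r)))).
Qed.

Lemma inT_Tpoly_coef {k l D f} (kappa : {additive S -> R[i]}) :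
  (forall c m, mono D m -> kappa (phi c * m) = c * kappa m) ->
  (forall m, mono D m -> kappa m = 0 \/ kappa m = 1) ->
  (0 < k)%N -> Tpoly k l D f -> inT a b k l (kappa f).
Proof.
move=> kappaM kappa01 k_gt0 [J [hJ [s [X [m [hX hm ->]]]]]].
pose i0 := Ordinal k_gt0.
pose sc j : R[i] := (-1) ^+ s j * (kappa (m j) == 1)%:R.
exists #|J|; split=> //.
exists (fun t i => if i == i0 then sc (enum_val t) * X (enum_val t) i
                  else X (enum_val t) i).
split=> [t i|].
  by case: ifP => _; [apply: allowed_signed|]; apply: hX.
rewrite raddf_sum (big_enum_val (fun j => kappa _)) /=; apply: eq_bigr => t _.
rewrite kappaM // [in RHS](bigD1 i0) //= ?eqxx.
rewrite [in RHS](eq_bigr (X (enum_val t))) => [|i /negbTE -> //].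
rewrite (bigD1 i0) //= /sc.
by case: (kappa01 _ (hm (enum_val t))) => ->; rewrite ?eqxx ?(eq_sym 0) ?oner_eq0 /=; ring.
Qed.

End TExpansion.

Arguments Tpoly {R d1 d2} a b {S} phi mono k l D f.

Lemma sum_nat_delta {S : pzSemiRingType} {d} (m : nat) (F : nat -> S) :
  \sum_(k < d) (m == k :> nat)%:R * F k = if (m < d)%N then F m else 0.
Proof.
rewrite (eq_bigr (fun k : 'I_d => if m == k :> nat then F k else 0)) => [|k _]; last first.
  by rewrite mulr_natl mulrb.
case: ltnP => [lt_md|le_dm].
  rewrite (bigD1 (Ordinal lt_md)) //= ifT; last exact: eqxx.
  rewrite big1 ?addr0 // => k; rewrite -val_eqE /= => neq_km.
  by rewrite ifF //; apply/negbTE; rewrite eq_sym; exact: neq_km.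
by rewrite big1 // => k _; rewrite ifF //; apply/negbTE/eqP; have := ltn_ord k; lia.
Qed.

Section Companion.
Context {S : comNzRingType} {d : nat} (c : 'I_d -> S).

Definition companion (i k : 'I_d) : S :=
  (i.+1 == k :> nat)%:R - (i == d.-1 :> nat)%:R * c k.

Lemma companion_row (z : S) (i : 'I_d) :
  \sum_k companion i k * z ^+ k =
  z ^+ i.+1 - (i == d.-1 :> nat)%:R * (z ^+ d + \sum_k c k * z ^+ k).
Proof.
rewrite (eq_bigr (fun k : 'I_d =>
    (i.+1 == k :> nat)%:R * z ^+ k - (i == d.-1 :> nat)%:R * (c k * z ^+ k)));
  last by move=> k _; rewrite /companion; ring.
rewrite sumrB -mulr_sumr sum_nat_delta; have := ltn_ord i.
case: (ltnP i.+1 d) => [lt_id _|le_di lt_id].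
  by rewrite (_ : (i == d.-1 :> nat) = false) /=; [ring | lia].
rewrite (_ : (i == d.-1 :> nat) = true) /=; last by lia.
by rewrite (_ : z ^+ d = z ^+ i.+1); [ring | congr (_ ^+ _); lia].
Qed.

End Companion.

Lemma rmorph_companion (S S' : comNzRingType) (f : {rmorphism S -> S'}) d
    (c : 'I_d -> S) i k :
  f (companion c i k) = companion (f \o c) i k.
Proof. by rewrite /companion rmorphB rmorphM !rmorph_nat. Qed.

Section ReplaceCol.
Context {S : comNzRingType} {n : nat} (j : 'I_n).

Definition replace_col (M : 'M[S]_n) (v : 'cV[S]_n) : 'M[S]_n :=
  \matrix_(r, c) if c == j then v r 0 else M r c.

Lemma col'_replace_col M v : col' j (replace_col M v) = col' j M.
Proof. by apply/matrixP => r c; rewrite !mxE eq_sym (negbTE (neq_lift _ _)). Qed.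

Lemma det_replace_col M v : \det (replace_col M v) = \sum_r \adj M j r * v r 0.
Proof.
rewrite (expand_det_col _ j); apply: eq_bigr => r _.
by rewrite [replace_col M v r j]mxE eqxx [\adj M j r]mxE mulrC /cofactor col'_replace_col.
Qed.

Lemma det_replace_col_mulmx M v : \det (replace_col M (M *m v)) = \det M * v j 0.
Proof.
rewrite det_replace_col.
have -> : \sum_r \adj M j r * (M *m v) r 0 = (\adj M *m (M *m v)) j 0 by rewrite mxE.
by rewrite mulmxA mul_adj_mx mul_scalar_mx mxE.
Qed.

Lemma det_replace_colB M (s t : S) v w :
  \det (replace_col M (s *: v - t *: w)) =
  s * \det (replace_col M v) - t * \det (replace_col M w).
Proof.
rewrite !det_replace_col !mulr_sumr -sumrB; apply: eq_bigr => r _.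
by rewrite !mxE; ring.
Qed.

Lemma det_replace_col_decomp (M : 'M[S]_n) (v w1 w2 : 'cV[S]_n) (s t : S) :
  v j 0 = 1 -> M *m v = s *: w1 - t *: w2 ->
  \det M = \det (replace_col M w1) * s + (- \det (replace_col M w2)) * t.
Proof.
move=> v_j Mv; rewrite -[LHS]mulr1 -v_j -det_replace_col_mulmx Mv det_replace_colB.
by ring.
Qed.

End ReplaceCol.

Section Grid.
Context {d1 d2 : nat}.
Local Notation n := (d1 * d2)%N.
Local Notation cell_t := ('I_d1 * 'I_d2)%type.

Definition cell (r : 'I_n) : cell_t := enum_val (cast_ord (esym (mxvec_cast d1 d2)) r).

Lemma cellK : cancel cell (uncurry (@mxvec_index d1 d2)).
Proof.
move=> r; rewrite /uncurry; case def_r: (cell r) => [i j].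
by rewrite /mxvec_index -def_r /cell enum_valK cast_ordKV.
Qed.

Lemma mxvec_indexK i j : cell (mxvec_index i j) = (i, j).
Proof. by rewrite /cell /mxvec_index cast_ordK enum_rankK. Qed.

Lemma eq_cell r c : (r == c) = (cell r == cell c).
Proof. by rewrite (can_eq cellK). Qed.

Lemma sum_cell {V : nmodType} (F : cell_t -> V) : \sum_r F (cell r) = \sum_t F t.
Proof.
rewrite [RHS](reindex cell) //; exists (uncurry (@mxvec_index d1 d2)).
  by move=> r _; apply: cellK.
by move=> [i j] _; apply: mxvec_indexK.
Qed.

End Grid.

Section Weights.
Context {d1 d2 : nat}.
Local Notation cell_t := ('I_d1 * 'I_d2)%type.

Definition height (t : cell_t) : nat := t.1 + t.2.
Definition wraps (t : cell_t) : nat := (t.1 == d1.-1 :> nat) + (t.2 == d2.-1 :> nat).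

Lemma sum_is_last d : (0 < d)%N -> (\sum_(i < d) (i == d.-1 :> nat))%N = 1%N.
Proof.
move=> d_gt0; rewrite (bigD1 (Ordinal (etrans (ltn_predL d) d_gt0))) //= eqxx big1 // => i.
by rewrite -val_eqE /= => /negbTE ->.
Qed.

Lemma sum_wraps : (0 < d1)%N -> (0 < d2)%N ->
  (\sum_(r < d1 * d2) wraps (cell r))%N = (d1 + d2)%N.
Proof.
move=> d1_gt0 d2_gt0.
rewrite (sum_cell (fun t => wraps t)) (eq_bigr (fun t => wraps (t.1, t.2))) => [|[] //].
rewrite -(pair_bigA _ (fun i j => wraps (i, j))) /= /wraps /=.
under eq_bigr do rewrite big_split /= sum_nat_const card_ord sum_is_last //.
by rewrite big_split /= -big_distrr /= sum_is_last // sum_nat_const card_ord; lia.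
Qed.

End Weights.

Section MulXY.
Context {R : realType} {d1 d2 : nat} {a : 'I_d1 -> R[i]} {b : 'I_d2 -> R[i]}.
Local Notation cell_t := ('I_d1 * 'I_d2)%type.

(* Row t expresses (x - y) x^t.1 y^t.2 modulo p(x) and q(y) in the monomial
   basis, see mulxy_row. *)
Definition mulxy_entry (t u : cell_t) : R[i] :=
  companion a t.1 u.1 * (t.2 == u.2 :> nat)%:R
  - (t.1 == u.1 :> nat)%:R * companion b t.2 u.2.

Definition mulxy_mx : 'M[R[i]]_(d1 * d2) := \matrix_(r, c) mulxy_entry (cell r) (cell c).

Lemma mulxy_entryE t u : mulxy_entry t u =
  ((t.1.+1 == u.1 :> nat) && (t.2 == u.2 :> nat))%:R
  - ((t.1 == d1.-1 :> nat) && (t.2 == u.2 :> nat))%:R * a u.1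
  - ((t.1 == u.1 :> nat) && (t.2.+1 == u.2 :> nat))%:R
  + ((t.1 == u.1 :> nat) && (t.2 == d2.-1 :> nat))%:R * b u.2.
Proof. by rewrite /mulxy_entry /companion -!mulnb !natrM; ring. Qed.

Context {S : comNzRingType} {phi : {rmorphism R[i] -> S}} {mono : int -> S -> Prop}.
Hypotheses (mono1 : forall D : int, 0 <= D -> mono D 1)
  (mono_le : forall (D D' : int) m, D <= D' -> mono D m -> mono D' m).
Local Notation Tpoly := (Tpoly a b phi mono).

Lemma Tpoly_mulxy_entry {t u L D} {g : S} : (0 < L)%N ->
  (t = u -> Tpoly (wraps t) L D g) ->
  ((height u <= (height t).+1)%N -> 0 <= D) ->
  Tpoly (wraps t) (L * 2 ^ wraps t) D (g *+ (t == u) - phi (mulxy_entry t u)).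
Proof.
case: t u => [i j] [k l] L_gt0 hg hD; rewrite /wraps /height /= in hD *.
have -> : g *+ ((i, j) == (k, l)) - phi (mulxy_entry (i, j) (k, l)) =
    ((i, j) == (k, l))%:R * g
    + ((i.+1 == k :> nat) && (j == l :> nat))%:R * -1
    + ((i == k :> nat) && (j.+1 == l :> nat))%:R * 1
    + ((i == d1.-1 :> nat) && (j == l :> nat))%:R * phi (a k)
    + ((i == k :> nat) && (j == d2.-1 :> nat))%:R * phi (- b l).
  by rewrite mulxy_entryE -mulr_natl !(rmorphD, rmorphN, rmorphM, rmorph_nat); ring.
have k_lt := ltn_ord k; have l_lt := ltn_ord l.
apply: (Tpoly_widen mono_le) (leqnn _) _ (lexx _) (TpolyD (TpolyD (TpolyD (TpolyD
    (Tpoly_cond (l := L) _ _) (Tpoly_cond (l := 1) _ _)) (Tpoly_cond (l := 1) _ _))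
    (Tpoly_cond (l := 1) _ _)) (Tpoly_cond (l := 1) _ _)).
- (* at most one of the diagonal and the two shift terms is present *)
  move: L_gt0; rewrite xpair_eqE -!val_eqE /=.
  by case: (i == d1.-1 :> nat); case: (j == d2.-1 :> nat) => /=; lia.
- by move/eqP; apply: hg.
- by move=> /andP[/eqP ki /eqP lj]; apply: TpolyN; apply: (Tpoly1 mono1 mono_le); apply: hD; lia.
- by move=> /andP[/eqP ki /eqP lj]; apply: (Tpoly1 mono1 mono_le); apply: hD; lia.
- move=> /andP[/eqP wi /eqP lj]; apply: (TpolyC mono1 mono_le); rewrite ?wi ?eqxx //.
    by apply: hD; lia.
  exact: allowed_a.
- move=> /andP[/eqP ki /eqP wj]; apply: (TpolyC mono1 mono_le); rewrite ?wj ?eqxx ?addn1 //.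
    by apply: hD; lia.
  exact/allowedN/allowed_b.
Qed.

End MulXY.

Arguments mulxy_entry {R d1 d2} a b t u.
Arguments mulxy_mx {R d1 d2} a b.

Section Monomials.
Context {K : comNzRingType}.

(* No degree bound is needed for polynomials in one variable. *)
Definition monomial_poly (D : int) (m : {poly K}) : Prop := exists k, m = 'X^k.

Definition monomial_mpoly (D : int) (m : {mpoly K[2]}) : Prop :=
  exists2 e : 'X_{1..2}, m = 'X_[e] & (mdeg e)%:Z <= D.

Lemma monomial_poly1 D : 0 <= D -> monomial_poly D 1.
Proof. by exists 0%N; rewrite expr0. Qed.

Lemma monomial_polyM D D' m m' :
  monomial_poly D m -> monomial_poly D' m' -> monomial_poly (D + D') (m * m').
Proof. by move=> [k ->] [k' ->]; exists (k + k')%N; rewrite exprD. Qed.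

Lemma monomial_poly_le D D' m : D <= D' -> monomial_poly D m -> monomial_poly D' m.
Proof. by []. Qed.

Lemma monomial_mpoly1 D : 0 <= D -> monomial_mpoly D 1.
Proof. by exists 0%MM; rewrite ?mpolyX0 ?mdeg0. Qed.

Lemma monomial_mpolyM D D' m m' :
  monomial_mpoly D m -> monomial_mpoly D' m' -> monomial_mpoly (D + D') (m * m').
Proof.
move=> [e -> hD] [e' -> hD']; exists (e + e')%MM; first by rewrite mpolyXD.
by rewrite mdegD PoszD lerD.
Qed.

Lemma monomial_mpoly_le D D' m : D <= D' -> monomial_mpoly D m -> monomial_mpoly D' m.
Proof. by move=> le_D [e -> he]; exists e => //; apply: le_trans le_D. Qed.

End Monomials.

Section Resultant.
Context {R : realType} {d1 d2 : nat} (a : 'I_d1 -> R[i]) (b : 'I_d2 -> R[i]).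
Hypotheses (d1_gt0 : (0 < d1)%N) (d2_gt0 : (0 < d2)%N).
Local Notation C := R[i].
Local Notation n := (d1 * d2)%N.
Local Notation N := (mulxy_mx a b).
Local Notation Tpoly_poly := (Tpoly a b (@polyC C) monomial_poly).

Lemma Tpoly_char_poly : Tpoly_poly (d1 + d2) (2 ^ (d1 + d2) * n`!) 0 (char_poly N).
Proof.
have hentry r c : Tpoly_poly (wraps (cell r)) (2 ^ wraps (cell r)) 0 (char_poly_mx N r c).
  rewrite !mxE eq_cell -[(2 ^ _)%N]mul1n.
  apply: (Tpoly_mulxy_entry monomial_poly1 monomial_poly_le) => // _.
  by apply: (Tpoly_mono monomial_poly_le); exists 1%N.
have := Tpoly_det monomial_poly1 monomial_polyM monomial_poly_le (Dt := 0) hentry.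
rewrite sum_wraps // -expn_sum sum_wraps // [(_`! * _)%N]mulnC; apply=> s.
by rewrite big1.
Qed.

Lemma inT_char_poly_coef j : inT a b (d1 + d2) (2 ^ (d1 + d2) * n`!) (char_poly N)`_j.
Proof.
apply: (inT_Tpoly_coef (coefp j)) Tpoly_char_poly.
- by move=> c m _; rewrite /= coefCM.
- by move=> m [k ->]; rewrite /= coefXn; case: (j == k); [right|left].
- by rewrite addn_gt0 d1_gt0.
Qed.

Local Notation S := {mpoly C[2]}.
Local Notation x := ('X_0 : S).
Local Notation y := ('X_1 : S).

Lemma peval2_monic d (c : 'I_d -> C) (t : S) :
  peval2 ('X^d + \sum_j c j *: 'X^j) t = t ^+ d + \sum_j (c j)%:MP * t ^+ j.
Proof.
rewrite /peval2 rmorphD rmorph_sum /= map_polyXn hornerD horner_sum hornerXn.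
by congr (_ + _); apply: eq_bigr => j _; rewrite map_polyZ hornerZ map_polyXn hornerXn.
Qed.

Definition xy_pow (t : 'I_d1 * 'I_d2) : S := x ^+ t.1 * y ^+ t.2.

Lemma mulxy_row t :
  \sum_u (mulxy_entry a b t u)%:MP * xy_pow u =
  (x - y) * xy_pow t - (t.1 == d1.-1 :> nat)%:R * peval2 (pp a) x * y ^+ t.2
    + (t.2 == d2.-1 :> nat)%:R * peval2 (qq b) y * x ^+ t.1.
Proof.
have sum_pair (F : 'I_d1 * 'I_d2 -> S) : \sum_u F u = \sum_k \sum_l F (k, l).
  by rewrite pair_bigA; apply: eq_bigr => -[].
rewrite (eq_bigr (fun u : 'I_d1 * 'I_d2 =>
    (companion a t.1 u.1)%:MP * x ^+ u.1 * ((t.2 == u.2 :> nat)%:R * y ^+ u.2)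
    - (t.1 == u.1 :> nat)%:R * x ^+ u.1 * ((companion b t.2 u.2)%:MP * y ^+ u.2)));
  last first.
  by move=> u _; rewrite /mulxy_entry /xy_pow rmorphB !rmorphM !rmorph_nat; ring.
rewrite sumrB !sum_pair /=.
under eq_bigr do rewrite -mulr_sumr (sum_nat_delta t.2 (GRing.exp y)) ltn_ord.
under [X in _ - X]eq_bigr do rewrite -mulr_sumr.
rewrite -!mulr_suml (sum_nat_delta t.1 (GRing.exp x)) ltn_ord.
under eq_bigr do rewrite rmorph_companion.
under [X in _ - _ * X]eq_bigr do rewrite rmorph_companion.
rewrite !companion_row /pp /qq !peval2_monic /xy_pow /= !exprS; ring.
Qed.

Lemma mpolyC_comm_xy : commr_rmorph (mpolyC 2 (R := C)) (x - y).
Proof. by move=> c; apply: mulrC. Qed.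

Definition char_mx_xy : 'M[S]_n :=
  map_mx (horner_morph mpolyC_comm_xy) (char_poly_mx N).

Lemma char_mx_xyE r c : char_mx_xy r c = (x - y) *+ (r == c) - (N r c)%:MP.
Proof.
rewrite !mxE rmorphB rmorphMn.
by congr (_ *+ _ - _); [exact: horner_morphX | exact: horner_morphC].
Qed.

Lemma det_char_mx_xy : \det char_mx_xy = peval2 (char_poly N) (x - y).
Proof. by rewrite det_map_mx. Qed.

Definition xy_pows : 'cV[S]_n := \col_r xy_pow (cell r).
Definition p_cofactor : 'cV[S]_n :=
  \col_r (((cell r).1 == d1.-1 :> nat)%:R * y ^+ (cell r).2).
Definition q_cofactor : 'cV[S]_n :=
  \col_r (((cell r).2 == d2.-1 :> nat)%:R * x ^+ (cell r).1).

Lemma char_mx_xy_mul_pows :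
  char_mx_xy *m xy_pows = peval2 (pp a) x *: p_cofactor - peval2 (qq b) y *: q_cofactor.
Proof.
apply/matrixP => r k; rewrite ord1 [LHS]mxE.
under eq_bigr do rewrite char_mx_xyE [xy_pows _ _]mxE mulrBl.
rewrite sumrB (bigD1 r) //= eqxx mulr1n big1 ?addr0 => [|c]; last first.
  by rewrite eq_sym => /negbTE ->; rewrite mulr0n mul0r.
under [X in _ - X]eq_bigr do rewrite [N _ _]mxE.
rewrite (sum_cell (fun u => (mulxy_entry a b (cell r) u)%:MP * xy_pow u)) mulxy_row.
by rewrite !mxE; ring.
Qed.

Definition corner : 'I_n := mxvec_index (Ordinal d1_gt0) (Ordinal d2_gt0).

Lemma xy_pows_corner : xy_pows corner 0 = 1.
Proof. by rewrite mxE mxvec_indexK /xy_pow !expr0 mulr1. Qed.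

Lemma resultant_identity :
  peval2 (char_poly N) (x - y) =
    \det (replace_col corner char_mx_xy p_cofactor) * peval2 (pp a) x
    + (- \det (replace_col corner char_mx_xy q_cofactor)) * peval2 (qq b) y.
Proof.
rewrite -det_char_mx_xy.
exact: det_replace_col_decomp xy_pows_corner char_mx_xy_mul_pows.
Qed.

(* Entry (r, c) of char_mx_xy has degree at most weight r c, the replacement
   column has degree at most height r = weight r corner, and the weights add up
   to n - 1 along every permutation. *)
Definition weight (r c : 'I_n) : int :=
  1 + (height (cell r))%:Z - (height (cell c))%:Z - (c == corner)%:Z.

Lemma sum_weight (s : 'S_n) : \sum_r weight r (s r) = n.-1%:Z.
Proof.
have sum_perm (F : 'I_n -> int) : \sum_r F (s r) = \sum_r F r.
  by rewrite [RHS](reindex_inj (@perm_inj _ s)).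
have sum_corner : \sum_r (r == corner)%:Z = 1.
  by rewrite (bigD1 corner) //= ?eqxx big1 ?addr0 // => r /negbTE ->.
rewrite /weight !sumrB big_split /= (sum_perm (fun c => (height (cell c))%:Z)).
rewrite (sum_perm (fun c => (c == corner)%:Z)) sum_corner sumr_const card_ord natz addrK.
have : (0 < n)%N by rewrite muln_gt0 d1_gt0.
lia.
Qed.

Local Notation Tpoly_mpoly := (Tpoly a b (mpolyC 2 (R := C)) monomial_mpoly).

Lemma Tpoly_X_pow k j D e : e%:Z <= D -> Tpoly_mpoly k 1 D ('X_j ^+ e).
Proof.
move=> le_eD; apply: (Tpoly_mono monomial_mpoly_le).
by exists (U_(j) *+ e)%MM; rewrite ?mpolyXn // mdegMn mdeg1 mul1n.
Qed.

Lemma Tpoly_char_mx_xy r c : c != corner ->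
  Tpoly_mpoly (wraps (cell r)) (2 * 2 ^ wraps (cell r)) (weight r c) (char_mx_xy r c).
Proof.
move=> c_ne; rewrite char_mx_xyE eq_cell [N _ _]mxE.
apply: (Tpoly_mulxy_entry monomial_mpoly1 monomial_mpoly_le) => // [eq_rc|].
  have -> : weight r c = 1 by rewrite /weight -eq_rc (negbTE c_ne); lia.
  rewrite -[2%N]/(1 + 1)%N -(expr1 'X_0) -(expr1 'X_1).
  by apply: TpolyD; [|apply: TpolyN]; apply: Tpoly_X_pow.
by rewrite /weight (negbTE c_ne); lia.
Qed.

Lemma Tpoly_det_replace_col {V : 'cV[S]_n} :
  (forall r, Tpoly_mpoly (wraps (cell r)) 1 (height (cell r)) (V r 0)) ->
  Tpoly_mpoly (d1 + d2) (n`! * (2 ^ n * 2 ^ (d1 + d2))) n.-1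
    (\det (replace_col corner char_mx_xy V)).
Proof.
move=> hV.
have hentry r c : Tpoly_mpoly (wraps (cell r)) (2 * 2 ^ wraps (cell r)) (weight r c)
    (replace_col corner char_mx_xy V r c).
  rewrite mxE; case: eqP => [->|/eqP c_ne]; last exact: Tpoly_char_mx_xy.
  move: (hV r); apply: (Tpoly_widen monomial_mpoly_le (leqnn _)).
    by rewrite muln_gt0 expn_gt0.
  by rewrite /weight eqxx mxvec_indexK /height /=; lia.
have := Tpoly_det monomial_mpoly1 monomial_mpolyM monomial_mpoly_le hentry.
rewrite sum_wraps // big_split /= prod_nat_const card_ord -expn_sum sum_wraps //.
by apply=> s; rewrite sum_weight.
Qed.

Lemma Tpoly_cond_X_pow k (c : bool) j e D :
  e%:Z <= D -> Tpoly_mpoly k 1 D (c%:R * 'X_j ^+ e).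
Proof.
move=> le_eD; have := Tpoly_cond c (fun _ => Tpoly_X_pow k j D e le_eD).
by apply: (Tpoly_widen monomial_mpoly_le (leqnn _) _ (lexx _)); rewrite muln1 leq_b1.
Qed.

Lemma Tpoly_p_cofactor r : Tpoly_mpoly (wraps (cell r)) 1 (height (cell r)) (p_cofactor r 0).
Proof. by rewrite mxE; apply: Tpoly_cond_X_pow; rewrite /height; lia. Qed.

Lemma Tpoly_q_cofactor r : Tpoly_mpoly (wraps (cell r)) 1 (height (cell r)) (q_cofactor r 0).
Proof. by rewrite mxE; apply: Tpoly_cond_X_pow; rewrite /height; lia. Qed.

Lemma msize_Tpoly k l (D : nat) f : Tpoly_mpoly k l D f -> (msize f <= D.+1)%N.
Proof.
move=> [J [_ [s [X [m [_ hm ->]]]]]].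
apply: leq_trans (msize_sum _ _ _) _; apply/bigmax_leqP => j _.
have [e -> le_eD] := hm j.
by rewrite mul_mpolyC; apply: leq_trans (msizeZ_le _ _) _; rewrite msizeX ltnS -lez_nat.
Qed.

Lemma inT_Tpoly_mcoeff k l D f e : (0 < k)%N -> Tpoly_mpoly k l D f -> inT a b k l f@_e.
Proof.
apply: (inT_Tpoly_coef (mcoeff e)) => [c m _|m [e' -> _]]; first by rewrite /= mcoeffCM.
by rewrite /= mcoeffX; case: (e' == e); [right|left].
Qed.

Lemma inT_cofactor_coef f e :
  Tpoly_mpoly (d1 + d2) (n`! * (2 ^ n * 2 ^ (d1 + d2))) n.-1 f ->
  inT a b (d1.+1 * d2.+1) (4 ^ (d1.+1 * d2.+1) * (d1.+1 * d2.+1)`!) f@_e.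
Proof.
have dt : (d1.+1 * d2.+1 = (n + d1 + d2).+1)%N by rewrite mulSn mulnS; lia.
move=> hf; apply: inT_Tpoly_mcoeff (Tpoly_widen monomial_mpoly_le _ _ (lexx _) hf).
- by rewrite dt.
- by rewrite dt; lia.
rewrite mulnC leq_mul //; last by apply: leq_fact; rewrite dt; lia.
by rewrite -expnD (_ : 4 = 2 ^ 2)%N // -expnM leq_exp2l // dt; lia.
Qed.

End Resultant.

Theorem lemma18 (R : realType) (d1 d2 : nat)
  (a : 'I_d1 -> R[i]) (b : 'I_d2 -> R[i]) :
  (1 <= d1)%N -> (1 <= d2)%N ->
  exists (r : {poly R[i]}) (R1 R2 : {mpoly R[i][2]}),
    [/\ peval2 r ('X_0 - 'X_1) =
          R1 * peval2 (pp a) 'X_0 + R2 * peval2 (qq b) 'X_1,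
        size r = (d1 * d2).+1 /\ lead_coef r = 1,
        (msize R1 <= d1 * d2)%N /\ (msize R2 <= d1 * d2)%N,
        forall n : nat, inT a b (d1 + d2) (2 ^ (d1 + d2) * (d1 * d2)`!) r`_n
      & forall m : 'X_{1..2},
          inT a b ((d1.+1) * (d2.+1)) (4 ^ ((d1.+1) * (d2.+1)) * ((d1.+1) * (d2.+1))`!) (R1@_m)
          /\ inT a b ((d1.+1) * (d2.+1)) (4 ^ ((d1.+1) * (d2.+1)) * ((d1.+1) * (d2.+1))`!) (R2@_m)].
Proof.
move=> d1_gt0 d2_gt0.
have T1 := Tpoly_det_replace_col a b d1_gt0 d2_gt0 (Tpoly_p_cofactor a b d1_gt0 d2_gt0).
have T2 := TpolyN
  (Tpoly_det_replace_col a b d1_gt0 d2_gt0 (Tpoly_q_cofactor a b d1_gt0 d2_gt0)).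
have n_eq : (d1 * d2).-1.+1 = (d1 * d2)%N by rewrite prednK // muln_gt0 d1_gt0.
eexists (char_poly (mulxy_mx a b)), _, _; split.
- exact: resultant_identity.
- by split; [rewrite size_char_poly | apply/monicP/char_poly_monic].
- by split; rewrite -[X in (_ <= X)%N]n_eq; apply: msize_Tpoly; [exact: T1 | exact: T2].
- exact: inT_char_poly_coef.
by move=> m; split; apply: (inT_cofactor_coef _ _ d1_gt0 d2_gt0);
  [exact: T1 | exact: T2].
Qed.
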